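(* In the setting of the generalized Hubbard Hamiltonian $H_{\mathrm{gen}}$ on a finite graph $G=(V,E)$, assume there is no spin-orbit coupling, i.e. $t^{\uparrow,\downarrow}_{\boldsymbol r,\boldsymbol r'}=t^{\downarrow,\uparrow}_{\boldsymbol r,\boldsymbol r'}=0$ for all edges, and that $t^{\uparrow,\uparrow}_{\boldsymbol r,\boldsymbol r'}\neq0\neq t^{\downarrow,\downarrow}_{\boldsymbol r,\boldsymbol r'}$ for every edge, and let $G$ be connected. Then nonzero numbers $q_{\boldsymbol r}$ satisfy the edge condition $q_{\boldsymbol r}t^{\sigma',\sigma}_{\boldsymbol r',\boldsymbol r}s_\sigma+q_{\boldsymbol r'}t^{\bar\sigma,\bar\sigma'}_{\boldsymbol r,\boldsymbol r'}s_{\sigma'}=0$ for all edges and all $\sigma,\sigma'$ if and only if, for every edge, $q_{\boldsymbol r}/q_{\boldsymbol r'}=-t^{\downarrow,\downarrow}_{\boldsymbol r,\boldsymbol r'}/\overline{t^{\uparrow,\uparrow}_{\boldsymbol r,\boldsymbol r'}}=-t^{\uparrow,\uparrow}_{\boldsymbol r,\boldsymbol r'}/\overline{t^{\downarrow,\downarrow}_{\boldsymbol r,\boldsymbol r'}}$. In that case $|t^{\uparrow,\uparrow}_{\boldsymbol r,\boldsymbol r'}|=|t^{\downarrow,\downarrow}_{\boldsymbol r,\boldsymbol r'}|$ and $|q_{\boldsymbol r}|$ is independent of $\boldsymbol r$; normalizing $q_{\boldsymbol r}=e^{i\phi_{\boldsymbol r}}$ and writing $t^{\uparrow,\uparrow}_{\boldsymbol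 r,\boldsymbol r'}=t_{\boldsymbol r,\boldsymbol r'}e^{i\theta^{\uparrow\uparrow}_{\boldsymbol r,\boldsymbol r'}}$, $t^{\downarrow,\downarrow}_{\boldsymbol r,\boldsymbol r'}=t_{\boldsymbol r,\boldsymbol r'}e^{i\theta^{\downarrow\downarrow}_{\boldsymbol r,\boldsymbol r'}}$ with $t_{\boldsymbol r,\boldsymbol r'}>0$, the condition is equivalent to $\theta^{\uparrow\uparrow}_{\boldsymbol r,\boldsymbol r'}+\theta^{\downarrow\downarrow}_{\boldsymbol r,\boldsymbol r'}+\pi\equiv\phi_{\boldsymbol r}-\phi_{\boldsymbol r'}\pmod{2\pi}$ for every edge. Consequently, if in addition $U_{\boldsymbol r}-\mu_{\boldsymbol r,\uparrow}-\mu_{\boldsymbol r,\downarrow}=\mathcal{E}$ for all $\boldsymbol r$, then $[H_{\mathrm{gen}},\eta^\dagger]=\mathcal{E}\eta^\dagger$ with $\eta^\dagger=\sum_{\boldsymbol r}e^{i\phi_{\boldsymbol r}}c^\dagger_{\boldsymbol r,\uparrow}c^\dagger_{\boldsymbol r,\downarrow}$.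
   Context: Generalized Hubbard Hamiltonian on a finite simple graph $G=(V,E)$ (each edge with a fixed orientation $(\boldsymbol r,\boldsymbol r')$): $H_{\mathrm{gen}}=-\sum_{\sigma,\sigma'}\sum_{\{\boldsymbol r,\boldsymbol r'\}\in E}(t^{\sigma,\sigma'}_{\boldsymbol r,\boldsymbol r'}c^\dagger_{\boldsymbol r,\sigma}c_{\boldsymbol r',\sigma'}+t^{\sigma',\sigma}_{\boldsymbol r',\boldsymbol r}c^\dagger_{\boldsymbol r',\sigma'}c_{\boldsymbol r,\sigma})-\sum_{\boldsymbol r,\sigma}\mu_{\boldsymbol r,\sigma}\hat n_{\boldsymbol r,\sigma}+\sum_{\boldsymbol r}U_{\boldsymbol r}\hat n_{\boldsymbol r,\uparrow}\hat n_{\boldsymbol r,\downarrow}$ with $t^{\sigma,\sigma'}_{\boldsymbol r,\boldsymbol r'}=\overline{t^{\sigma',\sigma}_{\boldsymbol r',\boldsymbol r}}$ and real $\mu_{\boldsymbol r,\sigma},U_{\boldsymbol r}$; $c,c^\dagger$ are spin-1/2 fermion operators, $\hat n_{\boldsymbol r,\sigma}=c^\dagger_{\boldsymbol r,\sigma}c_{\boldsymbol r,\sigma}$; $s_\uparrow=1,s_\downarrow=-1$, $\bar\uparrow=\downarrow,\bar\downarrow=\uparrow$. *)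

From HB Require Import structures.
From mathcomp Require Import all_boot all_order all_algebra.
From mathcomp Require Import complex.
From mathcomp Require Import reals trigo.

Set Implicit Arguments.
Unset Strict Implicit.
Unset Printing Implicit Defensive.

Import Order.TTheory GRing.Theory Num.Theory.
Local Open Scope ring_scope.
Local Open Scope complex_scope.

Inductive spin := Up | Dn.

Definition spin_to_bool (s : spin) : bool := if s is Up then true else false.
Definition bool_to_spin (b : bool) : spin := if b then Up else Dn.
Lemma spin_to_boolK : cancel spin_to_bool bool_to_spin.
Proof. by case. Qed.
HB.instance Definition _ := Finite.copy spin (can_type spin_to_boolK).

Definition sgn_spin {T : pzRingType} (s : spin) : T :=
  if s is Up then 1 else -1.
Definition flip (s : spin) : spin := if s is Up then Dn else Up.

Definition expi {R : realType} (x : R) : R[i] := (cos x +i* sin x)%C.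

Section Fock.
Variables (R : realType) (V : finType).

Definition mode := (V * spin)%type.

(* occupation-number basis states are the subsets of modes; operators are
   square matrices indexed (through enum_val) by these subsets. *)
Definition op := 'M[R[i]]_(#|{set mode}|).

Definition mk_op (f : {set mode} -> {set mode} -> R[i]) : op :=
  \matrix_(i, j) f (enum_val i) (enum_val j).

(* Jordan–Wigner sign: (-1)^(number of occupied modes of T before m),
   w.r.t. the fixed enumeration order of the modes. *)
Definition jw_sign (m : mode) (T : {set mode}) : R[i] :=
  (-1) ^+ #|[set m' in T | (enum_rank m' < enum_rank m)%N]|.

Definition cdag (m : mode) : op :=
  mk_op (fun S T => if (m \notin T) && (S == m |: T) then jw_sign m T else 0).

Definition cann (m : mode) : op :=
  mk_op (fun S T => if (m \in T) && (S == T :\ m) then jw_sign m T else 0).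

Definition numop (m : mode) : op := cdag m *m cann m.

Definition commutator (A B : op) : op := A *m B - B *m A.

(* Generalized Hubbard Hamiltonian.  The sum over (unoriented) edges of
   t_{r,r'} c^dag_r c_r' + t_{r',r} c^dag_r' c_r is written as the sum over
   ordered adjacent pairs (r, r'). *)
Definition H_gen (adj : rel V) (t : V -> V -> spin -> spin -> R[i])
    (mu : V -> spin -> R) (U : V -> R) : op :=
  - (\sum_(r : V) \sum_(r' : V | adj r r') \sum_(s : spin) \sum_(s' : spin)
        t r r' s s' *: (cdag (r, s) *m cann (r', s')))
  - (\sum_(r : V) \sum_(s : spin) (mu r s)%:C *: numop (r, s))
  + \sum_(r : V) (U r)%:C *: (numop (r, Up) *m numop (r, Dn)).

Definition eta_dag (q : V -> R[i]) : op :=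
  \sum_(r : V) q r *: (cdag (r, Up) *m cdag (r, Dn)).

Definition simple_graph (adj : rel V) : Prop :=
  (forall x y, adj x y = adj y x) /\ (forall x, ~~ adj x x).

Definition hermitian_hopping (adj : rel V) (t : V -> V -> spin -> spin -> R[i]) : Prop :=
  forall r r' s s', adj r r' -> t r r' s s' = (t r' r s' s)^*.

Definition edge_condition (adj : rel V) (t : V -> V -> spin -> spin -> R[i])
    (q : V -> R[i]) : Prop :=
  forall r r', adj r r' -> forall s s' : spin,
    q r * t r' r s' s * sgn_spin s + q r' * t r r' (flip s) (flip s') * sgn_spin s' = 0.

End Fock.

(* Without spin-orbit coupling only the spin-diagonal
   hoppings survive, and by hermiticity the edge condition on an edge
   (r, r') reduces to the two linear equations
     q_r conj(t^uu) + q_r' t^dd = 0   and   q_r conj(t^dd) + q_r' t^uu = 0,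
   i.e. to the two ratio equations of part (1).  Equating them gives
   |t^uu| = |t^dd|, so |q_r / q_r'| = 1 on every edge and |q| is constant
   on a connected graph (part (2)).  In polar form the ratios are phases,
   and equality of phases is congruence of angles modulo 2 pi (part (3)),
   which rests on cos x = 1 -> x in 2 pi Z.

   On the Jordan-Wigner Fock space we establish the
   canonical anticommutation relations from the matrix elements of the
   creation and annihilation operators.  They give the commutator of a
   hopping term c+_a c_b with a pair c+_x c+_y; summing, the number and
   double-occupancy terms multiply each local pair by
   U_r - mu_{r,up} - mu_{r,dn}, while the two orientations of each edge
   contribute opposite hopping terms exactly when the edge condition holds,
   so the hopping part drops out (part (4)). *)

From HB Require Import structures.
From mathcomp Require Import all_boot all_order all_algebra.
From mathcomp Require Import complex.
From mathcomp Require Import reals trigo.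
From mathcomp Require Import ring lra.
Set Implicit Arguments.
Unset Strict Implicit.
Unset Printing Implicit Defensive.

Import Order.TTheory GRing.Theory Num.Theory.
Local Open Scope ring_scope.
Local Open Scope complex_scope.

Section Phase.
Variable R : realType.
Implicit Types a b x : R.

Lemma expiD a b : expi (a + b) = expi a * expi b.
Proof. by rewrite /expi cosD sinD; simpc; congr (_ +i* _); ring. Qed.

Lemma expi0 : expi (0 : R) = 1.
Proof. by rewrite /expi cos0 sin0. Qed.

Lemma expipi : expi (pi : R) = -1.
Proof. by rewrite /expi cospi sinpi; simpc. Qed.

Lemma expiNK a : expi (- a) * expi a = 1.
Proof. by rewrite -expiD addNr expi0. Qed.

Lemma expi_neq0 a : expi a != 0.
Proof. by apply/eqP => ea; have := expiNK a; rewrite ea mulr0 => /eqP; rewrite eq_sym oner_eq0. Qed.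

Lemma expiV a : (expi a)^-1 = expi (- a).
Proof. by rewrite -[LHS]mul1r -(expiNK a) mulfK ?expi_neq0. Qed.

Lemma expi_ratio a b : expi a / expi b = expi (a - b).
Proof. by rewrite expiV -expiD. Qed.

Lemma periodicz (f : R -> R) (T : R) : periodic f T ->
  forall (k : int) a, f (a + k%:~R * T) = f a.
Proof.
move=> fT [] n a; first by rewrite mulrzl -pmulrn (periodicn fT).
by rewrite NegzE mulrNz mulNr mulrzl -pmulrn -[in RHS](subrK (T *+ n.+1) a) (periodicn fT).
Qed.

Lemma periodic_cos2pi : periodic (@cos R) (2 * pi).
Proof. by move=> u; rewrite mulr_natl cosD2pi. Qed.

Lemma periodic_sin2pi : periodic (@sin R) (2 * pi).
Proof. by move=> u; rewrite mulr_natl sinD2pi. Qed.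

(* The only zeros of 1 - cos are the multiples of 2 pi: reduce x modulo
   2 pi into [0, 2 pi) and use injectivity of cos on [0, pi]. *)
Lemma cos_eq1 x : cos x = 1 -> exists k : int, x = k%:~R * (2 * pi).
Proof.
move=> cx; have pi0 := @pi_gt0 R; have p2 : 0 < 2 * pi :> R by lra.
pose k := Num.floor (x / (2 * pi)); exists k.
pose y := x - k%:~R * (2 * pi).
have y_ge0 : 0 <= y by rewrite subr_ge0 -ler_pdivlMr // floor_le.
have y_lt : y < 2 * pi.
  have := floorD1_gt (x / (2 * pi)); rewrite -/k ltr_pdivrMr // intrD mulrDl mul1r.
  by rewrite /y; lra.
have cy : cos y = 1.
  by rewrite -cx -[in RHS](subrK (k%:~R * (2 * pi)) x) (periodicz periodic_cos2pi).
suff y0 : y = 0 by apply/eqP; rewrite -subr_eq0 -/y y0.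
have inI (z : R) : 0 <= z <= pi -> z \in `[0, pi] by rewrite in_itv.
have cos0I : (0 : R) \in `[0, pi] by apply: inI; lra.
have [ypi|piy] := lerP y pi.
  by apply: cos_inj; rewrite ?cy ?cos0 // inI // y_ge0.
have c2y : cos (2 * pi - y) = cos 0 by rewrite addrC periodic_cos2pi cosN cy cos0.
have /cos_inj : 2 * pi - y \in `[0, pi] by apply: inI; lra.
by move=> /(_ 0 cos0I c2y); lra.
Qed.

Lemma polar_ratio (c a b : R) : 0 < c ->
  - (c%:C * expi a) / (c%:C * expi b)^* = expi (a + b + pi).
Proof.
move=> c_gt0; have cz : c%:C != 0 :> R[i] by apply/eqP => -[] /eqP; rewrite gt_eqF.
rewrite [X in _ / X](_ : _ = c%:C * expi (- b)); last by rewrite /expi cosN sinN; simpc.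
rewrite expiD expipi expiD -expiV.
by field; rewrite cz expi_neq0.
Qed.

Lemma expi_eqP a b : expi a = expi b <-> exists k : int, a = b + k%:~R * (2 * pi).
Proof.
split=> [eab|[k ->]]; last by rewrite /expi (periodicz periodic_cos2pi) (periodicz periodic_sin2pi).
have : expi (a - b) = 1 by rewrite -expi_ratio eab divff ?expi_neq0.
case=> /cos_eq1 [k abk] _; exists k.
by rewrite -abk addrC subrK.
Qed.
End Phase.

Lemma lin_ratioP (F : fieldType) (x y c d : F) : c != 0 -> y != 0 ->
  x * c + y * d = 0 <-> x / y = - d / c.
Proof.
move=> cz yz; split=> [/eqP|xy]; last by rewrite -(divfK yz x) xy; field.
by rewrite addr_eq0 => /eqP xc; rewrite -(mulfK cz x) xc; field; rewrite cz yz.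
Qed.

Lemma connect_const (T : finType) (e : rel T) (X : Type) (f : T -> X) :
  (forall x y, e x y -> f x = f y) -> forall x y, connect e x y -> f x = f y.
Proof.
move=> fe x y /connectP [p]; elim: p x => [|z p IHp] x /=; first by move=> _ ->.
by case/andP=> /fe -> /IHp.
Qed.

Section EdgeCondition.
Variables (R : realType) (V : finType) (adj : rel V)
  (t : V -> V -> spin -> spin -> R[i]).
Hypotheses (adjC : symmetric adj) (t_herm : hermitian_hopping adj t)
  (no_soc : forall r r', adj r r' -> t r r' Up Dn = 0 /\ t r r' Dn Up = 0).

Lemma hop_rev r r' : adj r r' -> forall s s', t r' r s' s = (t r r' s s')^*.
Proof. by move=> a s s'; apply: t_herm; rewrite adjC. Qed.

Lemma edge_condition_diag (q : V -> R[i]) :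
  edge_condition adj t q <->
  (forall r r', adj r r' ->
     q r * (t r r' Up Up)^* + q r' * t r r' Dn Dn = 0 /\
     q r * (t r r' Dn Dn)^* + q r' * t r r' Up Up = 0).
Proof.
split=> [E r r' a|E r r' a s s'].
  have := E r r' a Up Up; have := E r r' a Dn Dn; rewrite /= !(hop_rev a).
  by rewrite !mulrN1 !mulr1 -opprD => /eqP; rewrite oppr_eq0 => /eqP.
have [s1 s2] := no_soc a; have [e1 e2] := E r r' a.
case: s; case: s' => /=; rewrite (hop_rev a) ?s1 ?s2 ?rmorph0 ?mulr0 ?mul0r ?addr0 //.
  by rewrite !mulr1.
by rewrite !mulrN1 -opprD e2 oppr0.
Qed.

Hypothesis t_nz : forall r r', adj r r' -> t r r' Up Up != 0 /\ t r r' Dn Dn != 0.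

Lemma edge_condition_ratio (q : V -> R[i]) : (forall r, q r != 0) ->
  edge_condition adj t q <->
  (forall r r', adj r r' ->
     q r / q r' = - t r r' Dn Dn / (t r r' Up Up)^* /\
     q r / q r' = - t r r' Up Up / (t r r' Dn Dn)^*).
Proof.
move=> q_nz; rewrite edge_condition_diag.
split=> E r r' a; have [uz dz] := t_nz a; have [e1 e2] := E r r' a;
  by split; apply/lin_ratioP; rewrite ?conjc_eq0.
Qed.

Lemma edge_condition_moduli (q : V -> R[i]) :
  (forall x y : V, connect adj x y) -> (forall r, q r != 0) ->
  edge_condition adj t q ->
  (forall r r', adj r r' -> `|t r r' Up Up| = `|t r r' Dn Dn|) /\
  (forall r r', `|q r| = `|q r'|).
Proof.
move=> conn q_nz /(edge_condition_ratio q_nz) E.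
have norm_t r r' : adj r r' -> `|t r r' Up Up| = `|t r r' Dn Dn|.
  move=> a; have [uz dz] := t_nz a; have [e1 e2] := E r r' a.
  have : t r r' Dn Dn * (t r r' Dn Dn)^* = t r r' Up Up * (t r r' Up Up)^*.
    by move: e2; rewrite e1 => /eqP; rewrite eqr_div ?conjc_eq0 // !mulNr => /eqP /oppr_inj.
  by rewrite -!sqr_normc => /eqP; rewrite eqrXn2 // => /eqP.
split=> // x y; apply: (@connect_const _ _ _ (fun r => `|q r|) _ x y (conn x y)) => r r' a.
have [uz dz] := t_nz a; have [e1 _] := E r r' a.
have : `|q r / q r'| = 1 by rewrite e1 normf_div normrN normcJ norm_t // divff ?normr_eq0.
by rewrite normf_div => /divr1_eq.
Qed.

Lemma edge_condition_phase (phi : V -> R) (tt th_uu th_dd : V -> V -> R) :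
  (forall r r', adj r r' ->
     [/\ 0 < tt r r',
         t r r' Up Up = (tt r r')%:C * expi (th_uu r r') &
         t r r' Dn Dn = (tt r r')%:C * expi (th_dd r r')]) ->
  edge_condition adj t (fun r => expi (phi r)) <->
  (forall r r', adj r r' ->
     exists k : int,
       th_uu r r' + th_dd r r' + pi = phi r - phi r' + k%:~R * (2 * pi)).
Proof.
move=> polar; rewrite edge_condition_ratio => [|r]; last exact: expi_neq0.
split=> E r r' a; have [tt_gt0 t_uu t_dd] := polar r r' a.
  have [+ _] := E r r' a; rewrite /= t_uu t_dd polar_ratio //.
  by rewrite (expi_ratio (phi r)) [th_dd r r' + _]addrC => /esym/expi_eqP.
rewrite /= t_uu t_dd !polar_ratio // (expi_ratio (phi r)) [th_dd r r' + _]addrC.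
by have /expi_eqP <- := E r r' a.
Qed.

End EdgeCondition.

Lemma sum_edges_antisym (F : numFieldType) (M : lmodType F) (T : finType)
    (e : rel T) (G : T -> T -> M) :
  symmetric e -> (forall x y, e x y -> G x y + G y x = 0) ->
  \sum_x \sum_(y | e x y) G x y = 0.
Proof.
move=> eC Ganti; set S := (X in X = 0).
have S_swap : S = \sum_x \sum_(y | e x y) G y x.
  rewrite /S (exchange_big_dep predT) //=; apply: eq_bigr => x _.
  by apply: eq_bigl => y; rewrite eC.
have : (2 : F) *: S = 0.
  rewrite scaler_nat mulr2n {2}S_swap /S -big_split /=; apply: big1 => x _.
  by rewrite -big_split /=; apply: big1 => y; apply: Ganti.
by move/eqP; rewrite scaler_eq0 pnatr_eq0 /= => /eqP.
Qed.

Section FockSpace.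
Variables (R : realType) (V : finType).
Local Notation op := (op R V).
Local Notation mode := (mode V).
Local Notation cd := (cdag R).
Local Notation cn := (cann R).
Local Notation jw := (jw_sign R).
Implicit Types (a b m : mode) (S T K : {set mode}) (A B C : op).

Lemma op_ext A B :
  (forall S T, A (enum_rank S) (enum_rank T) = B (enum_rank S) (enum_rank T)) ->
  A = B.
Proof. by move=> AB; apply/matrixP => i j; rewrite -(enum_valK i) -(enum_valK j) AB. Qed.

Lemma mulE A B S T : (A * B) (enum_rank S) (enum_rank T) =
  \sum_K A (enum_rank S) (enum_rank K) * B (enum_rank K) (enum_rank T).
Proof. by rewrite -mulmxE mxE (reindex enum_rank) //; apply: onW_bij; apply: enum_rank_bij. Qed.

Lemma oneE S T : (1 : op) (enum_rank S) (enum_rank T) = (S == T)%:R.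
Proof. by rewrite mxE (inj_eq enum_rank_inj). Qed.

Lemma cdE m S T : cd m (enum_rank S) (enum_rank T) =
  if (m \notin T) && (S == m |: T) then jw m T else 0.
Proof. by rewrite mxE !enum_rankK. Qed.

Lemma cnE m S T : cn m (enum_rank S) (enum_rank T) =
  if (m \in T) && (S == T :\ m) then jw m T else 0.
Proof. by rewrite mxE !enum_rankK. Qed.

(* Products of single-mode operators have a single nonzero column entry. *)
Lemma sum_delta (f : {set mode} -> R[i]) (c : bool) X v :
  \sum_K f K * (if c && (K == X) then v else 0) = if c then f X * v else 0.
Proof.
case: c; last by rewrite big1 // => K _; rewrite mulr0.
by rewrite (bigD1 X) //= eqxx big1 ?addr0 // => K /negbTE ->; rewrite mulr0.
Qed.

Lemma cdcdE a b S T : (cd a * cd b) (enum_rank S) (enum_rank T) =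
  if b \notin T then
    (if (a \notin b |: T) && (S == a |: (b |: T)) then jw a (b |: T) else 0) * jw b T
  else 0.
Proof. by rewrite mulE; under eq_bigr => K _ do rewrite !cdE; exact: sum_delta. Qed.

Lemma cncdE a b S T : (cn a * cd b) (enum_rank S) (enum_rank T) =
  if b \notin T then
    (if (a \in b |: T) && (S == (b |: T) :\ a) then jw a (b |: T) else 0) * jw b T
  else 0.
Proof. by rewrite mulE; under eq_bigr => K _ do rewrite cnE cdE; exact: sum_delta. Qed.

Lemma cdcnE a b S T : (cd b * cn a) (enum_rank S) (enum_rank T) =
  if a \in T then
    (if (b \notin T :\ a) && (S == b |: (T :\ a)) then jw b (T :\ a) else 0) * jw a T
  else 0.
Proof. by rewrite mulE; under eq_bigr => K _ do rewrite cnE cdE; exact: sum_delta. Qed.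

(* The sign picked up by the Jordan-Wigner string of a when b is occupied. *)
Definition order_sign a b : R[i] := if (enum_rank b < enum_rank a)%N then -1 else 1.

Lemma order_sign_id a : order_sign a a = 1.
Proof. by rewrite /order_sign ltnn. Qed.

Lemma order_sign_sq a b : order_sign a b * order_sign a b = 1.
Proof. by rewrite /order_sign; case: ifP; rewrite ?mulrNN mulr1. Qed.

Lemma order_sign_anti a b : a != b -> order_sign a b + order_sign b a = 0.
Proof.
move=> ab; rewrite /order_sign.
have : enum_rank a != enum_rank b by rewrite (inj_eq enum_rank_inj).
by case: ltngtP => h; rewrite ?addNr ?addrN // => /negP []; apply/eqP/val_inj.
Qed.

Lemma jw_sq a T : jw a T * jw a T = 1.
Proof. by rewrite /jw_sign -exprD addnn -mul2n exprM sqrrN !expr1n. Qed.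

Lemma jwU a b T : b \notin T -> jw a (b |: T) = order_sign a b * jw a T.
Proof.
move=> bT; rewrite /jw_sign /order_sign; set A := [set m' in T | _].
have -> : [set m' in b |: T | (enum_rank m' < enum_rank a)%N] =
    if (enum_rank b < enum_rank a)%N then b |: A else A.
  apply/setP => x; rewrite !inE; case: ifP => ba; rewrite ?inE;
    by case: (eqVneq x b) => [->|] //=; rewrite ba andbF.
by case: ifP => _; rewrite ?mul1r // cardsU1 inE (negbTE bT) exprS.
Qed.

Lemma jwD a b T : b \in T -> jw a (T :\ b) = order_sign a b * jw a T.
Proof.
move=> bT; have := @jwU a b (T :\ b); rewrite setD11 setD1K // => /(_ isT) ->.
by rewrite mulrA order_sign_sq mul1r.
Qed.

Lemma jw_exchange a b T : a != b ->
  order_sign a b * jw a T * jw b T + order_sign b a * jw b T * jw a T = 0.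
Proof. by move=> ab; rewrite [order_sign b a * _ * _]mulrAC -!mulrDl order_sign_anti // !mul0r. Qed.

Lemma cd_anti a b : cd a * cd b = - (cd b * cd a).
Proof.
apply/eqP; rewrite -addr_eq0; apply/eqP/op_ext => S T; rewrite mxE [RHS]mxE !cdcdE.
have [<-|ab] := eqVneq a b; first by rewrite setU11 /= !mul0r !if_same addr0.
have [ab1 ab2] : (a == b) = false /\ (b == a) = false.
  by split; apply/negbTE; rewrite // eq_sym.
rewrite !in_setU1 ab1 ab2 /=.
case: (boolP (b \in T)) => bT; case: (boolP (a \in T)) => aT //=;
  rewrite ?mul0r ?if_same ?addr0 // setUCA.
by case: eqP => _; rewrite ?mul0r ?addr0 // (jwU _ bT) (jwU _ aT) jw_exchange.
Qed.

Lemma cd_sq a : cd a * cd a = 0.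
Proof. by apply: op_ext => S T; rewrite [RHS]mxE cdcdE setU11 /= mul0r if_same. Qed.

Lemma car a b : cn a * cd b = (a == b)%:R *: (1 : op) - cd b * cn a.
Proof.
suff <- : cn a * cd b + cd b * cn a = (a == b)%:R *: (1 : op) by rewrite addrK.
apply: op_ext => S T; rewrite mxE [RHS]mxE oneE cncdE cdcnE.
have [<-|ab] := eqVneq a b.
  case: (boolP (a \in T)) => aT /=.
    rewrite setD11 setD1K //= (jwD _ aT) order_sign_id mul1r add0r mul1r.
    by case: eqP => _; rewrite ?jw_sq ?mul0r.
  rewrite setU11 setU1K //= (jwU _ aT) order_sign_id mul1r addr0 mul1r.
  by case: eqP => _; rewrite ?jw_sq ?mul0r.
have [ab1 ab2] : (a == b) = false /\ (b == a) = false.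
  by split; apply/negbTE; rewrite // eq_sym.
rewrite mul0r in_setU1 in_setD1 ab1 ab2 /=.
case: (boolP (b \in T)) => bT; case: (boolP (a \in T)) => aT //=;
  rewrite ?mul0r ?if_same ?addr0 ?add0r //.
have -> : (b |: T) :\ a = b |: (T :\ a).
  by apply/setP => x; rewrite !inE; case: (eqVneq x b) => // ->; rewrite eq_sym ab.
by case: eqP => _; rewrite ?mul0r ?addr0 // (jwU _ bT) (jwD _ aT) jw_exchange.
Qed.

Lemma op_scalerAl k A B : k *: (A * B) = k *: A * B.
Proof. by rewrite -!mulmxE scalemxAl. Qed.

Lemma op_scalerAr k A B : k *: (A * B) = A * (k *: B).
Proof. by rewrite -!mulmxE scalemxAr. Qed.

Lemma commE A B : commutator A B = A * B - B * A.
Proof. by rewrite /commutator !mulmxE. Qed.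

Lemma commDl A B C : commutator (A + B) C = commutator A C + commutator B C.
Proof. by rewrite !commE mulrDl mulrDr opprD addrACA. Qed.

Lemma commNl A C : commutator (- A) C = - commutator A C.
Proof. by rewrite !commE mulNr mulrN opprB opprK addrC. Qed.

Lemma commZl k A C : commutator (k *: A) C = k *: commutator A C.
Proof. by rewrite !commE -op_scalerAl -op_scalerAr scalerBr. Qed.

Lemma commZr k A C : commutator A (k *: C) = k *: commutator A C.
Proof. by rewrite !commE -op_scalerAl -op_scalerAr scalerBr. Qed.

Lemma commMl A B C : commutator (A *m B) C = A * commutator B C + commutator A C * B.
Proof. by rewrite !commE mulmxE mulrBr mulrBl !mulrA addrA subrK. Qed.

Lemma comm_suml (I : Type) (r : seq I) (P : pred I) (F : I -> op) C :
  commutator (\sum_(i <- r | P i) F i) C = \sum_(i <- r | P i) commutator (F i) C.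
Proof.
apply: (big_morph (fun A => commutator A C)) => [A B|]; first exact: commDl.
by rewrite commE mul0r mulr0 subrr.
Qed.

Lemma comm_sumr (I : Type) (r : seq I) (P : pred I) (F : I -> op) C :
  commutator C (\sum_(i <- r | P i) F i) = \sum_(i <- r | P i) commutator C (F i).
Proof.
apply: (big_morph (fun A => commutator C A)) => [A B|]; last by rewrite commE mul0r mulr0 subrr.
by rewrite !commE mulrDl mulrDr opprD addrACA.
Qed.

Lemma comm_hop_pair a b x y :
  commutator (cd a *m cn b) (cd x *m cd y) =
  (b == x)%:R *: (cd a * cd y) - (b == y)%:R *: (cd a * cd x).
Proof.
rewrite commE !mulmxE.
have e1 : cd a * cn b * (cd x * cd y) =
    (b == x)%:R *: (cd a * cd y) - cd a * cd x * (cn b * cd y).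
  by rewrite mulrA -(mulrA (cd a)) car mulrBr mulrBl -op_scalerAr mulr1 -op_scalerAl !mulrA.
have e2 : cd a * cd x * (cn b * cd y) =
    (b == y)%:R *: (cd a * cd x) - cd a * cd x * cd y * cn b.
  by rewrite car mulrBr -op_scalerAr mulr1 !mulrA.
have e3 : cd x * cd y * (cd a * cn b) = cd a * cd x * cd y * cn b.
  rewrite mulrA -(mulrA (cd x) (cd y)) (cd_anti y a) mulrN mulrA (cd_anti x a).
  by rewrite !mulNr opprK.
by rewrite e1 e2 e3 opprB addrA addrAC addrK.
Qed.

End FockSpace.

Lemma flipK : involutive flip. Proof. by case. Qed.

Lemma sgn_flip (T : pzRingType) s : sgn_spin (flip s) = - sgn_spin s :> T.
Proof. by case: s; rewrite /= ?opprK. Qed.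

Section EtaPairing.
Variables (R : realType) (V : finType).
Local Notation op := (op R V).
Local Notation cd := (cdag R).
Local Notation cn := (cann R).
Local Notation pair r := (cd (r, Up) * cd (r, Dn)).
Implicit Types (q : V -> R[i]) (r : V).

Lemma big_spin (F : spin -> op) : \sum_s F s = F Up + F Dn.
Proof. by rewrite (bigD1 Up) //= (bigD1 Dn) //= big1 ?addr0 //; case. Qed.

Lemma comm_num_eta q r s : commutator (numop R (r, s)) (eta_dag q) = q r *: pair r.
Proof.
rewrite /eta_dag comm_sumr (bigD1 r) //= big1 ?addr0 => [|r' r'r].
  rewrite commZr /numop comm_hop_pair !xpair_eqE eqxx /=.
  by case: s => /=; rewrite ?scale1r ?scale0r ?subr0 ?sub0r // cd_anti opprK.
by rewrite commZr /numop comm_hop_pair !xpair_eqE eq_sym (negbTE r'r) !scale0r subrr scaler0.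
Qed.

Lemma comm_double_eta q r :
  commutator (numop R (r, Up) *m numop R (r, Dn)) (eta_dag q) = q r *: pair r.
Proof.
rewrite commMl !comm_num_eta -op_scalerAr -op_scalerAl -scalerDr; congr (_ *: _).
rewrite /numop !mulmxE -!mulrA (mulrA (cd (r, Dn))) cd_sq mul0r !mulr0 addr0.
rewrite (mulrA (cn (r, Up))) car eqxx scale1r mulrBl mul1r mulrBr.
by rewrite !mulrA cd_sq !mul0r subr0.
Qed.

Lemma comm_hop_eta q (a : mode V) r' s' :
  commutator (cd a *m cn (r', s')) (eta_dag q) =
  (q r' * sgn_spin s') *: (cd a * cd (r', flip s')).
Proof.
rewrite /eta_dag comm_sumr (bigD1 r') //= big1 ?addr0 => [|r'' r''r'].
  rewrite commZr comm_hop_pair !xpair_eqE eqxx /=.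
  by case: s' => /=; rewrite ?scale1r ?scale0r ?subr0 ?sub0r ?mulr1 // mulrN1 scaleNr scalerN.
by rewrite commZr comm_hop_pair !xpair_eqE eq_sym (negbTE r''r') !scale0r subrr scaler0.
Qed.

(* The contribution of the directed edge (r, r') to [hopping, eta^dagger]. *)
Definition edge_pair_term (t : V -> V -> spin -> spin -> R[i]) q r r' : op :=
  \sum_s \sum_s' (t r r' s s' * (q r' * sgn_spin s')) *: (cd (r, s) * cd (r', flip s')).

Lemma edge_pair_term_anti (adj : rel V) t q r r' :
  edge_condition adj t q -> adj r r' ->
  edge_pair_term t q r r' + edge_pair_term t q r' r = 0.
Proof.
move=> E a; have flip_inj := can_inj flipK.
rewrite /edge_pair_term [X in _ + X]exchange_big /= (reindex_inj flip_inj).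
rewrite -big_split /=; apply: big1 => s _; rewrite (reindex_inj flip_inj) /=.
rewrite -big_split /=; apply: big1 => s' _.
rewrite flipK cd_anti scalerN -scaleNr -scalerDl; apply/eqP.
by rewrite scaler_eq0 -(E r r' a s s') sgn_flip; apply/orP; left; apply/eqP; ring.
Qed.

Lemma comm_hopping_eta (adj : rel V) t q :
  symmetric adj -> edge_condition adj t q ->
  commutator (\sum_r \sum_(r' | adj r r') \sum_s \sum_s'
                t r r' s s' *: (cd (r, s) *m cn (r', s'))) (eta_dag q) = 0.
Proof.
move=> adjC E; rewrite -[RHS](sum_edges_antisym (G := edge_pair_term t q) adjC).
- rewrite comm_suml; apply: eq_bigr => r _; rewrite comm_suml; apply: eq_bigr => r' _.
  rewrite comm_suml; apply: eq_bigr => s _; rewrite comm_suml; apply: eq_bigr => s' _.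
  by rewrite commZl comm_hop_eta scalerA.
- by move=> r r'; apply: edge_pair_term_anti.
Qed.

Lemma eta_pairing (adj : rel V) t (mu : V -> spin -> R) (U : V -> R) q (Ecal : R) :
  symmetric adj -> edge_condition adj t q ->
  (forall r, U r - mu r Up - mu r Dn = Ecal) ->
  commutator (H_gen adj t mu U) (eta_dag q) = Ecal%:C *: eta_dag q.
Proof.
move=> adjC E UmuE; rewrite /H_gen !commDl !commNl comm_hopping_eta // oppr0 add0r.
rewrite !comm_suml -sumrN /eta_dag scaler_sumr -big_split /=; apply: eq_bigr => r _.
rewrite comm_suml big_spin !commZl !comm_num_eta comm_double_eta -mulmxE.
rewrite !scalerA -scalerDl -!scaleNr -!scalerDl; congr (_ *: _).
by rewrite -(UmuE r) !rmorphB /= -[_ *: q r]/(_ * q r); ring.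
Qed.

End EtaPairing.

Theorem mainTheorem5 (R : realType) (V : finType) (adj : rel V)
    (t : V -> V -> spin -> spin -> R[i]) (mu : V -> spin -> R) (U : V -> R) :
  simple_graph adj ->
  hermitian_hopping adj t ->
  (* G connected *)
  (forall x y : V, connect adj x y) ->
  (* no spin-orbit coupling *)
  (forall r r', adj r r' -> t r r' Up Dn = 0 /\ t r r' Dn Up = 0) ->
  (* nonvanishing spin-conserving hoppings *)
  (forall r r', adj r r' -> t r r' Up Up != 0 /\ t r r' Dn Dn != 0) ->
  [/\
   (* (1) edge condition <-> ratio condition, for nonzero q *)
   forall q : V -> R[i], (forall r, q r != 0) ->
     (edge_condition adj t q <->
      (forall r r', adj r r' ->
         q r / q r' = - t r r' Dn Dn / (t r r' Up Up)^* /\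
         q r / q r' = - t r r' Up Up / (t r r' Dn Dn)^*)),
   (* (2) consequences: equal moduli of hoppings, constant |q| *)
   forall q : V -> R[i], (forall r, q r != 0) -> edge_condition adj t q ->
     (forall r r', adj r r' -> `|t r r' Up Up| = `|t r r' Dn Dn|) /\
     (forall r r', `|q r| = `|q r'|),
   (* (3) phase form of the condition *)
   forall (phi : V -> R) (tt th_uu th_dd : V -> V -> R),
     (forall r r', adj r r' ->
        [/\ 0 < tt r r',
            t r r' Up Up = (tt r r')%:C * expi (th_uu r r') &
            t r r' Dn Dn = (tt r r')%:C * expi (th_dd r r')]) ->
     (edge_condition adj t (fun r => expi (phi r)) <->
      (forall r r', adj r r' ->
         exists k : int,
           th_uu r r' + th_dd r r' + pi = phi r - phi r' + k%:~R * (2 * pi)))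
   &
   (* (4) eta-pairing *)
   forall (phi : V -> R) (Ecal : R),
     edge_condition adj t (fun r => expi (phi r)) ->
     (forall r, U r - mu r Up - mu r Dn = Ecal) ->
     commutator (H_gen adj t mu U) (eta_dag (fun r => expi (phi r)))
       = Ecal%:C *: eta_dag (fun r => expi (phi r))].
Proof.
move=> [adjC _] t_herm conn no_soc t_nz; split.
- by move=> q q_nz; apply: edge_condition_ratio.
- by move=> q q_nz E; apply: edge_condition_moduli.
- by move=> phi tt th_uu th_dd polar; apply: (edge_condition_phase _ _ _ _ phi polar).
- by move=> phi Ecal E UmuE; apply: eta_pairing.
Qed.
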